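(* Let $F$ be a field with $\mathrm{char}\,F\ne2$ and let $B$ be a $3$-dimensional non-commutative involutive $F$-algebra. Then there is a basis $u,v$ of $\mathrm{Im}\,B$ such that $u\times v=u$ and either $(u,u)=0$ or $(u,v)=0$.
   Context: Algebras are unital, multiplication bilinear and not necessarily associative. $B$ is involutive if there is an anti-automorphism $a\mapsto\bar a$ of order dividing $2$ with $a+\bar a\in F1$ and $a\bar a\in F1$ for all $a$; such algebras are quadratic ($1,a,a^2$ linearly dependent for all $a$). For a quadratic algebra with $\mathrm{char}\,F\ne2$, $\mathrm{Im}\,B=\{u\in B\setminus F1:u^2\in F1\}\cup\{0\}$, $B=F1\oplus\mathrm{Im}\,B$, and for $u,v\in\mathrm{Im}\,B$ one writes $uv=(u,v)1+u\times v$ with $(u,v)\in F$ and $u\times v\in\mathrm{Im}\,B$; this defines a bilinear form $(\cdot,\cdot)$ and an anti-commutative product $\times$ on $\mathrm{Im}\,B$. *)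

From HB Require Import structures.
From mathcomp Require Import all_boot all_order all_algebra.
From Stdlib Require Import ClassicalEpsilon.
Set Implicit Arguments. Unset Strict Implicit. Unset Printing Implicit Defensive.
Import GRing.Theory.
Local Open Scope ring_scope.

Definition is_unital_algebra (F : fieldType) (B : vectType F)
    (mul : B -> B -> B) (one : B) : Prop :=
  [/\ forall (a : F) (x y z : B), mul (a *: x + y) z = a *: mul x z + mul y z,
      forall (a : F) (x y z : B), mul z (a *: x + y) = a *: mul z x + mul z y
    & forall x : B, mul one x = x /\ mul x one = x].

Definition inF1 (F : fieldType) (B : vectType F) (one x : B) : bool :=
  x \in <[one]>%VS.

(* An anti-automorphism of order dividing 2 (linear, reverses products,
   squares to the identity; bijectivity follows from the latter). *)
Definition is_involution (F : fieldType) (B : vectType F)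
    (mul : B -> B -> B) (conj : B -> B) : Prop :=
  [/\ forall (a : F) (x y : B), conj (a *: x + y) = a *: conj x + conj y,
      forall x y : B, conj (mul x y) = mul (conj y) (conj x)
    & forall x : B, conj (conj x) = x].

Definition involutive_algebra (F : fieldType) (B : vectType F)
    (mul : B -> B -> B) (one : B) : Prop :=
  exists conj : B -> B, is_involution mul conj /\
    forall a : B, inF1 one (a + conj a) /\ inF1 one (mul a (conj a)).

Definition ImB (F : fieldType) (B : vectType F)
    (mul : B -> B -> B) (one u : B) : bool :=
  (u == 0) || (~~ inF1 one u && inF1 one (mul u u)).

(* For u, v in Im B: uv = (u,v)1 + u x v with (u,v) in F, u x v in Im B. *)
Definition dotB (F : fieldType) (B : vectType F)
    (mul : B -> B -> B) (one u v : B) : F :=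
  epsilon (inhabits (0 : F)) (fun a : F => ImB mul one (mul u v - a *: one)).

Definition crossB (F : fieldType) (B : vectType F)
    (mul : B -> B -> B) (one u v : B) : B :=
  mul u v - dotB mul one u v *: one.

Definition basis_of_ImB (F : fieldType) (B : vectType F)
    (mul : B -> B -> B) (one u v : B) : Prop :=
  [/\ ImB mul one u, ImB mul one v, free [:: u; v]
    & forall w : B, ImB mul one w -> w \in <<[:: u; v]>>%VS].

From HB Require Import structures.
From mathcomp Require Import all_boot all_order all_algebra.
From Stdlib Require Import ClassicalEpsilon.
Set Implicit Arguments. Unset Strict Implicit. Unset Printing Implicit Defensive.
Import GRing.Theory.
Local Open Scope ring_scope.

(* Since char F <> 2, Im B is exactly the (-1)-eigenspace of the involution,
   so B = F1 ⊕ Im B with Im B of dimension 2, and on Im B one has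
   (u,v)1 = (uv + vu)/2 and u × v = (uv - vu)/2, both bilinear.
   Non-commutativity yields x, y in Im B with w := x × y <> 0.  Writing
   w = αx + βy gives w × y = αw and w × x = -βw, so a rescaling of x or y
   is a v with w × v = w.  Replacing v by v + λw keeps w × v = w, and when
   (w,w) <> 0 the choice λ = -(w,v)/(w,w) makes (w,v) = 0. *)

Section LinearFunction.
Variables (F : fieldType) (U V : lmodType F) (f : U -> V).
Hypothesis f_linear : forall a x y, f (a *: x + y) = a *: f x + f y.

Lemma lin0 : f 0 = 0.
Proof.
by have /esym/eqP := f_linear 1 0 0; rewrite !scale1r addr0 -subr_eq0 addrK => /eqP.
Qed.

Lemma linZ a x : f (a *: x) = a *: f x.
Proof. by rewrite -[a *: x]addr0 f_linear lin0 addr0. Qed.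

Lemma linD x y : f (x + y) = f x + f y.
Proof. by rewrite -[x]scale1r f_linear !scale1r. Qed.

Lemma linN x : f (- x) = - f x.
Proof. by rewrite -scaleN1r linZ scaleN1r. Qed.

Lemma linB x y : f (x - y) = f x - f y.
Proof. by rewrite linD linN. Qed.

End LinearFunction.

Lemma span2P (F : fieldType) (B : vectType F) (a b u : B) :
  u \in <<[:: a; b]>>%VS -> exists k l : F, u = k *: a + l *: b.
Proof.
rewrite span_cons span_seq1 => /memv_addP [p /vlineP [k ->] [q /vlineP [l ->] ->]].
by exists k, l.
Qed.

Section UnitalAlgebra.
Variables (F : fieldType) (B : vectType F) (mul : B -> B -> B) (one : B).
Hypothesis alg : is_unital_algebra mul one.

Lemma amulZl a x z : mul (a *: x) z = a *: mul x z.
Proof. by case: alg => linl _ _; apply: (linZ (f := mul^~ z)) => *; apply: linl. Qed.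

Lemma amulZr a x z : mul z (a *: x) = a *: mul z x.
Proof. by case: alg => _ linr _; apply: (linZ (f := mul z)) => *; apply: linr. Qed.

Lemma amulDl x y z : mul (x + y) z = mul x z + mul y z.
Proof. by case: alg => linl _ _; apply: (linD (f := mul^~ z)) => *; apply: linl. Qed.

Lemma amulDr x y z : mul z (x + y) = mul z x + mul z y.
Proof. by case: alg => _ linr _; apply: (linD (f := mul z)) => *; apply: linr. Qed.

Lemma amulBr x y z : mul z (x - y) = mul z x - mul z y.
Proof. by case: alg => _ linr _; apply: (linB (f := mul z)) => *; apply: linr. Qed.

Lemma amulNr x z : mul z (- x) = - mul z x.
Proof. by case: alg => _ linr _; apply: (linN (f := mul z)) => *; apply: linr. Qed.

Lemma amulNl x z : mul (- x) z = - mul x z.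
Proof. by case: alg => linl _ _; apply: (linN (f := mul^~ z)) => *; apply: linl. Qed.

Lemma amul0l z : mul 0 z = 0.
Proof. by case: alg => linl _ _; apply: (lin0 (f := mul^~ z)) => *; apply: linl. Qed.

Lemma amul1l x : mul one x = x.
Proof. by case: alg => _ _ /(_ x) []. Qed.

Lemma amul1r x : mul x one = x.
Proof. by case: alg => _ _ /(_ x) []. Qed.

Lemma unit_neq0 : (exists x y, mul x y != mul y x) -> one != 0.
Proof.
case=> x [y]; apply: contraNneq => one0.
by rewrite -(amul1l x) -(amul1l y) one0 !amul0l.
Qed.

Lemma scale_one_inj : one != 0 -> injective ( *:%R^~ one).
Proof.
move=> one0 a b /eqP; rewrite -subr_eq0 -scalerBl scaler_eq0 (negbTE one0) orbF.
by rewrite subr_eq0 => /eqP.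
Qed.

Lemma commutator_add_scalars x y c d :
  mul (x + c *: one) (y + d *: one) - mul (y + d *: one) (x + c *: one)
  = mul x y - mul y x.
Proof.
have addl u z k : mul (u + k *: one) z = mul u z + k *: z.
  by rewrite amulDl amulZl amul1l.
have addr u z k : mul z (u + k *: one) = mul z u + k *: z.
  by rewrite amulDr amulZr amul1r.
rewrite [mul (x + _) _]addl [mul (y + _) _]addr addr addl.
by rewrite opprD addrACA subrr addr0 opprD addrACA subrr addr0.
Qed.

(* The half-commutator; it is bilinear on all of [B] and agrees with
   [crossB] on [Im B] (lemma [crossB_E]). *)
Definition cross u v := 2%:R^-1 *: (mul u v - mul v u).

Lemma cross_linear_l a u u' v :
  cross (a *: u + u') v = a *: cross u v + cross u' v.
Proof.
rewrite /cross amulDl amulDr amulZl amulZr scalerA mulrC -scalerA -scalerDr.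
by congr (_ *: _); rewrite scalerBr opprD addrACA.
Qed.

Lemma crossC u v : cross v u = - cross u v.
Proof. by rewrite /cross -scalerN opprB. Qed.

Lemma cross_linear_r a v v' u :
  cross u (a *: v + v') = a *: cross u v + cross u v'.
Proof.
by rewrite [LHS]crossC cross_linear_l (crossC u v) (crossC u v') scalerN opprD !opprK.
Qed.

Lemma crossZl a u v : cross (a *: u) v = a *: cross u v.
Proof. by apply: (linZ (f := cross^~ v)) => *; apply: cross_linear_l. Qed.

Lemma crossDl u u' v : cross (u + u') v = cross u v + cross u' v.
Proof. by apply: (linD (f := cross^~ v)) => *; apply: cross_linear_l. Qed.

Lemma crossZr a u v : cross u (a *: v) = a *: cross u v.
Proof. by apply: (linZ (f := cross u)) => *; apply: cross_linear_r. Qed.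

Lemma cross0r u : cross u 0 = 0.
Proof. by apply: (lin0 (f := cross u)) => *; apply: cross_linear_r. Qed.

Lemma crossxx u : cross u u = 0.
Proof. by rewrite /cross subrr scaler0. Qed.

Lemma cross_neq0_free u v : cross u v != 0 -> free [:: u; v].
Proof.
move=> uv0; rewrite free_cons seq1_free span_seq1 andbC.
have [v0 | v0 /=] := eqVneq v 0; first by rewrite v0 cross0r eqxx in uv0.
by apply/vlineP => -[k ukv]; rewrite ukv crossZl crossxx scaler0 eqxx in uv0.
Qed.

Section Involution.
Variable conj : B -> B.
Hypotheses (two_neq0 : (2%:R : F) != 0) (one_neq0 : one != 0).
Hypothesis inv : is_involution mul conj.
Hypothesis conj_quadratic :
  forall a, inF1 one (a + conj a) /\ inF1 one (mul a (conj a)).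

Local Notation Im := (ImB mul one).
Local Notation dot := (dotB mul one).

Lemma conjZ a x : conj (a *: x) = a *: conj x.
Proof. by case: inv => lin _ _; apply: linZ. Qed.

Lemma conjD x y : conj (x + y) = conj x + conj y.
Proof. by case: inv => lin _ _; apply: linD. Qed.

Lemma conjB x y : conj (x - y) = conj x - conj y.
Proof. by case: inv => lin _ _; apply: linB. Qed.

Lemma conj0 : conj 0 = 0.
Proof. by case: inv => lin _ _; apply: lin0. Qed.

Lemma conj_mul x y : conj (mul x y) = mul (conj y) (conj x).
Proof. by case: inv. Qed.

Lemma conjK : involutive conj.
Proof. by case: inv. Qed.

Lemma conj1 : conj one = one.
Proof. by rewrite -[LHS]amul1l -{1}(conjK one) -conj_mul amul1l conjK. Qed.

Lemma skew_inF1 z : conj z = - z -> inF1 one z -> z = 0.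
Proof.
move=> zN /vlineP [k zk]; have zz : conj z = z by rewrite zk conjZ conj1.
have : z + z = 0 by rewrite -{1}zz zN addNr.
by rewrite -mulr2n -scaler_nat => /eqP; rewrite scaler_eq0 (negbTE two_neq0) => /eqP.
Qed.

Lemma ImBP z : reflect (conj z = - z) (Im z).
Proof.
apply: (iffP orP) => [[/eqP -> | /andP [zF1 zz]] | zN]; first by rewrite conj0 oppr0.
  have [[t tz] [m mz]] := (vlineP _ _ (conj_quadratic z).1, vlineP _ _ (conj_quadratic z).2).
  have [n nz] := vlineP _ _ zz.
  have conjz : conj z = t *: one - z by rewrite -tz addrC addKr.
  (* [mul z (conj z) = t z - z^2] puts [t z] in [F1], while [z] is not. *)
  have tzF1 : t *: z = (m + n) *: one.
    by rewrite scalerDl -mz -nz conjz amulBr amulZr amul1r subrK.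
  have [t0 | tn0] := eqVneq t 0; first by rewrite conjz t0 scale0r sub0r.
  case/negP: zF1; apply/vlineP; exists (t^-1 * (m + n)).
  by rewrite -scalerA -tzF1 scalerA mulVf ?scale1r.
have [-> | z0] := eqVneq z 0; [by left | right].
apply/andP; split; first by apply: contra z0 => /(skew_inF1 zN) ->.
by rewrite /inF1 -[mul z z]opprK -amulNr -zN memvN; apply: (conj_quadratic z).2.
Qed.

Lemma ImB0 : Im 0.
Proof. by rewrite /ImB eqxx. Qed.

Lemma ImB_inF1 z : Im z -> inF1 one z -> z = 0.
Proof. by case/orP => [/eqP | /andP [/negbTE ->]]. Qed.

Lemma ImB_lin a u v : Im u -> Im v -> Im (a *: u + v).
Proof.
by move=> /ImBP uN /ImBP vN; apply/ImBP; rewrite conjD conjZ uN vN scalerN opprD.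
Qed.

Lemma ImB_sub_scalarP p a :
  reflect (p + conj p = (a *+ 2) *: one) (Im (p - a *: one)).
Proof.
apply: (iffP (ImBP _)); rewrite conjB conjZ conj1 opprB -scalerMnl mulr2n => e.
  by rewrite -(subrK (a *: one) (conj p)) e addrA [p + _]addrC subrK.
by rewrite -(addKr p (conj p)) e addrA addrK addrC.
Qed.

Lemma ImB_decomp p : exists a, Im (p - a *: one).
Proof.
have [t pt] := vlineP _ _ (conj_quadratic p).1.
by exists (t / 2%:R); apply/ImB_sub_scalarP; rewrite pt -mulr_natr divfK.
Qed.

Lemma conj_mul_ImB u v : Im u -> Im v -> conj (mul u v) = mul v u.
Proof. by move=> /ImBP uN /ImBP vN; rewrite conj_mul uN vN amulNl amulNr opprK. Qed.

Lemma dotB_E u v : Im u -> Im v -> dot u v *: one = 2%:R^-1 *: (mul u v + mul v u).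
Proof.
move=> Iu Iv; have [a Ia] := ImB_decomp (mul u v).
have /ImB_sub_scalarP := epsilon_spec (inhabits 0)
  (fun a => Im (mul u v - a *: one)) (ex_intro _ a Ia).
by rewrite conj_mul_ImB // => ->; rewrite -scalerMnl -scaler_nat !scalerA mulKf.
Qed.

Lemma crossB_E u v : Im u -> Im v -> crossB mul one u v = cross u v.
Proof.
move=> Iu Iv; rewrite /crossB dotB_E // /cross; apply: (scalerI two_neq0).
by rewrite scalerBr !scalerA mulfV // !scale1r scaler_nat mulr2n addrKA.
Qed.

Lemma ImB_cross u v : Im u -> Im v -> Im (cross u v).
Proof.
by move=> Iu Iv; apply/ImBP; rewrite /cross conjZ conjB !conj_mul_ImB // -scalerN opprB.
Qed.

Lemma dotB_linear_r a u v v' : Im u -> Im v -> Im v' ->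
  dot u (a *: v + v') = a * dot u v + dot u v'.
Proof.
move=> Iu Iv Iv'; apply: (scale_one_inj one_neq0).
rewrite scalerDl -scalerA !dotB_E ?ImB_lin // amulDl amulDr amulZl amulZr.
by rewrite addrACA -scalerDr (scalerA a) mulrC -scalerA -scalerDr.
Qed.

Lemma ImBZ a u : Im u -> Im (a *: u).
Proof. by move=> Iu; rewrite -[a *: u]addr0 ImB_lin ?ImB0. Qed.

Lemma span2_subImB x y z : Im x -> Im y -> z \in <<[:: x; y]>>%VS -> Im z.
Proof. by move=> Ix Iy /span2P [k [l ->]]; rewrite ImB_lin ?ImBZ. Qed.

Lemma noncomm_ImB_cross :
  (exists x y, mul x y != mul y x) -> exists x y, [/\ Im x, Im y & cross x y != 0].
Proof.
case=> x [y xy]; have [[c Ix] [d Iy]] := (ImB_decomp x, ImB_decomp y).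
exists (x - c *: one), (y - d *: one); split => //; apply: contra xy.
rewrite /cross scaler_eq0 invr_eq0 (negbTE two_neq0) /= -[in X in _ -> X]subr_eq0.
by have := commutator_add_scalars (x - c *: one) (y - d *: one) c d; rewrite !subrK => ->.
Qed.

Section DimensionThree.
Hypothesis dim3 : \dim (fullv : {vspace B}) = 3%N.

Lemma ImB_sub_span2 x y z :
  Im x -> Im y -> free [:: x; y] -> Im z -> z \in <<[:: x; y]>>%VS.
Proof.
move=> Ix Iy fxy Iz.
have fr3 : free [:: one; x; y].
  rewrite free_cons fxy andbT; apply: contra one_neq0 => /(span2_subImB Ix Iy) I1.
  by rewrite (ImB_inF1 I1 (memv_line one)).
have : z \in <<[:: one; x; y]>>%VS.
  have /eqP -> : <<[:: one; x; y]>>%VS == fullv by rewrite eqEdim subvf dim3 (eqP fr3).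
  exact: memvf.
rewrite span_cons => /memv_addP [s s1 [p pxy zsp]].
suff s0 : s = 0 by rewrite zsp s0 add0r.
apply: ImB_inF1 s1; have -> : s = - p + z by rewrite zsp [RHS]addrC addrK.
by rewrite -scaleN1r ImB_lin // (span2_subImB Ix Iy).
Qed.

Lemma exists_cross_eq_self x y : Im x -> Im y -> cross x y != 0 ->
  exists2 v, Im v & cross (cross x y) v = cross x y.
Proof.
move=> Ix Iy w0.
have [al [be ew]] := span2P (ImB_sub_span2 Ix Iy (cross_neq0_free w0) (ImB_cross Ix Iy)).
have [al0 | aln0] := eqVneq al 0; last first.
  exists (al^-1 *: y); first exact: ImBZ.
  by rewrite crossZr {1}ew crossDl !crossZl crossxx scaler0 addr0 scalerA mulVf ?scale1r.
have ben0 : be != 0 by apply: contra w0 => /eqP be0; rewrite ew al0 be0 !scale0r addr0.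
exists ((- be)^-1 *: x); first exact: ImBZ.
rewrite crossZr {1}ew crossDl !crossZl crossxx scaler0 add0r crossC scalerN -scaleNr.
by rewrite scalerA mulVf ?oppr_eq0 ?scale1r.
Qed.

End DimensionThree.

Lemma exists_isotropic_or_orthogonal w v1 : Im w -> Im v1 -> cross w v1 = w ->
  exists v, [/\ Im v, cross w v = w & dot w w = 0 \/ dot w v = 0].
Proof.
move=> Iw Iv1 wv1; have [ww0 | ww0] := eqVneq (dot w w) 0.
  by exists v1; split => //; left.
exists ((- dot w v1 / dot w w) *: w + v1); split; first exact: ImB_lin.
  by rewrite cross_linear_r crossxx scaler0 add0r.
by right; rewrite dotB_linear_r // divfK // addNr.
Qed.

Theorem ImB_normal_basis : \dim (fullv : {vspace B}) = 3%N ->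
  (exists x y, mul x y != mul y x) ->
  exists u v, [/\ basis_of_ImB mul one u v, crossB mul one u v = u
                & dot u u = 0 \/ dot u v = 0].
Proof.
move=> dim3 /noncomm_ImB_cross [x [y [Ix Iy xy0]]].
have [v1 Iv1 wv1] := exists_cross_eq_self dim3 Ix Iy xy0.
have Iw := ImB_cross Ix Iy.
have [v [Iv wv dot0]] := exists_isotropic_or_orthogonal Iw Iv1 wv1.
have fwv : free [:: cross x y; v] by apply: cross_neq0_free; rewrite wv.
exists (cross x y), v; split; last exact: dot0; last by rewrite crossB_E.
by split => // z; apply: ImB_sub_span2.
Qed.

End Involution.

End UnitalAlgebra.

Theorem lemma4p7 (F : fieldType) (B : vectType F)
    (mul : B -> B -> B) (one : B) :
  ~~ (2%N \in [pchar F]) ->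
  is_unital_algebra mul one ->
  \dim (fullv : {vspace B}) = 3%N ->
  (exists x y : B, mul x y != mul y x) ->
  involutive_algebra mul one ->
  exists u v : B,
    [/\ basis_of_ImB mul one u v,
        crossB mul one u v = u
      & dotB mul one u u = 0 \/ dotB mul one u v = 0].
Proof.
move=> char2 alg dim3 noncomm [conj [inv quad]].
have two_neq0 : (2%:R : F) != 0 by apply: contra char2 => two0; rewrite inE /= two0.
exact: (ImB_normal_basis alg two_neq0 (unit_neq0 alg noncomm) inv quad dim3 noncomm).
Qed.
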